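(* For every prime $p$, $t(3p)=3p-3$.
   Context: For a positive integer $n$ let $S(\mathbb{Z}_n)$ be the set of bijections $\mathbb{Z}_n\to\mathbb{Z}_n$. For $\pi\in S(\mathbb{Z}_n)$, $\mathrm{cyc}(\pi)$ is the number of cycles (including fixed points) of $\pi$ and $t(\pi)=n-\mathrm{cyc}(\pi)$. Let $[\pi]=\{x\mapsto \pi(x+b): b\in\mathbb{Z}_n\}$, $t([\pi])=\min_{\sigma\in[\pi]}t(\sigma)$, and $t(n)=\max_{\pi\in S(\mathbb{Z}_n)}t([\pi])$. *)

From mathcomp Require Import all_boot all_order all_fingroup.
Set Implicit Arguments. Unset Strict Implicit. Unset Printing Implicit Defensive.

(* Z_n is modelled by 'I_n; x + b (mod n) is iter b ordS x, ordS being
   the cyclic successor x |-> x+1 mod n. *)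
Definition addZ n (x b : 'I_n) : 'I_n := iter b (@ordS n) x.

Lemma addZ_inj n (b : 'I_n) : injective (fun x => addZ x b).
Proof.
rewrite /addZ; elim: (nat_of_ord b) => [|k IH] x y //= H.
by apply: IH; apply: ordS_inj.
Qed.

Definition rotZ n (b : 'I_n) : {perm 'I_n} := perm (@addZ_inj n b).

Definition cyc n (pi : {perm 'I_n}) : nat := #|porbits pi|.

Definition tperm_ n (pi : {perm 'I_n}) : nat := n - cyc pi.

(* the element x |-> pi (x + b) of [pi]; note (s * t) x = t (s x) *)
Definition shiftp n (pi : {perm 'I_n}) (b : 'I_n) : {perm 'I_n} := rotZ b * pi.

Definition tclass n (pi : {perm 'I_n}) : nat :=
  \big[minn/n]_(b : 'I_n) tperm_ (shiftp pi b).

Definition tn (n : nat) : nat := \max_(pi : {perm 'I_n}) tclass pi.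

(* If every shift x |-> pi (x + b) of pi had at most two cycles, no
   shift could fix two points, nor fix a point and swap two others. Then
   y |-> y - pi y and y |-> y + pi y are both permutations of Z_n, and summing
   (y - pi y)^2 + (y + pi y)^2 = 2 y^2 + 2 (pi y)^2 over y gives 2 S = 0 in Z_n
   for S = 0^2 + ... + (n-1)^2, which fails when 3 divides n. For p > 3 identify Z_3p with Z_3 x F_p and let
   pi (u, v) = (f v - u, g v), g a primitive root mod p. Every shift has the same
   shape: v turns about a centre v0 by x |-> g x. The line v = v0 carries a fixed
   point and a 2-cycle, and the other points form a single cycle as soon as the
   alternating sum of f along a v-cycle is nonzero in Z_3. Taking
   f v = chi v + c chi (v - 1) for the quadratic character chi, that sum is
   +-(J a + c J (a - 1)) for some a, where the Jacobi sum J is p - 1 at 0 and -1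
   elsewhere; a suitable c in Z_3 makes it nonzero. For p = 2, 3 explicit
   permutations are checked by computation. *)

From mathcomp Require Import all_boot all_order all_fingroup all_algebra.
From mathcomp Require Import cyclic finfield zify ring.
Set Implicit Arguments. Unset Strict Implicit. Unset Printing Implicit Defensive.
Import GRing.Theory.

Lemma addZE n (x b : 'I_n) : val (addZ x b) = (x + b) %% n.
Proof.
rewrite /addZ; elim: (nat_of_ord b) => [|k IH] /=; first by rewrite addn0 modn_small.
by rewrite IH addnS -addn1 modnDml addn1.
Qed.

Lemma shiftpE n (pi : {perm 'I_n}) b x : shiftp pi b x = pi (addZ x b).
Proof. by rewrite /shiftp permM /rotZ permE. Qed.

Section PermutationOrbits.
Variables (T : finType) (s : {perm T}).

Lemma porbit_sub_closed (A : {pred T}) x :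
  (forall a, a \in A -> s a \in A) -> x \in A -> {subset porbit s x <= A}.
Proof.
move=> sA Ax _ /porbitP [i ->]; elim: i => [|i IH]; first by rewrite expg0 perm1.
by rewrite expgSr permM sA.
Qed.

Lemma porbit_fixed x y : s x = x -> y \in porbit s x -> y = x.
Proof.
move=> sx yx; apply/eqP; apply: (porbit_sub_closed (A := pred1 x)) yx; last first.
  by rewrite inE.
by move=> a; rewrite !inE => /eqP ->; rewrite sx.
Qed.

Lemma card_porbits_gt2 x y z :
  y \notin porbit s x -> z \notin porbit s x -> z \notin porbit s y ->
  2 < #|porbits s|.
Proof.
rewrite -!eq_porbit_mem => nyx nzx nzy.
have orbs w : porbit s w \in porbits s by apply: imset_f.
apply/card_gt2P; exists (porbit s x), (porbit s y), (porbit s z).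
by split; split; rewrite ?orbs // eq_sym.
Qed.

Lemma card_porbits_le (zs : seq T) :
  (forall x, has (fun z => x \in porbit s z) zs) -> #|porbits s| <= size zs.
Proof.
move=> cover; have sub : porbits s \subset porbit s @: zs.
  apply/subsetP => _ /imsetP [x _ ->]; have /hasP [z zs_z xz] := cover x.
  by move: xz; rewrite -eq_porbit_mem => /eqP ->; apply: imset_f.
exact: leq_trans (subset_leq_card sub) (leq_trans (leq_imset_card _ _) (card_size zs)).
Qed.

Lemma exists_notin (l : seq T) : size l < #|T| -> exists w, w \notin l.
Proof.
move=> lt_l; apply/existsP; rewrite -negb_forall; apply: contraL lt_l => /forallP l_all.
by rewrite -leqNgt (leq_trans _ (card_size l)) // subset_leq_card //; apply/subsetP.
Qed.

Lemma card_porbits_gt2_fixed2 x y :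
  2 < #|T| -> s x = x -> s y = y -> x != y -> 2 < #|porbits s|.
Proof.
move=> T_gt2 sx sy nxy; have [w] := exists_notin (l := [:: x; y]) T_gt2.
rewrite !inE negb_or => /andP [nwx nwy].
apply: (@card_porbits_gt2 x y w); apply/negP.
- by move/(porbit_fixed sx)/eqP; rewrite eq_sym (negbTE nxy).
- by move/(porbit_fixed sx)/eqP; rewrite (negbTE nwx).
- by move/(porbit_fixed sy)/eqP; rewrite (negbTE nwy).
Qed.

Lemma card_porbits_gt2_fixed_swap z x y :
  3 < #|T| -> s z = z -> s x = y -> s y = x -> x != y -> 2 < #|porbits s|.
Proof.
move=> T_gt3 sz sx sy nxy.
have [nzx nzy] : z != x /\ z != y.
  split; apply: contraNneq nxy => zs.
  - by rewrite -sx -zs sz.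
  - by rewrite -sy -zs sz.
have [w] := exists_notin (l := [:: x; y; z]) T_gt3.
rewrite !inE !negb_or => /and3P [nwx nwy nwz].
have xy_closed : forall a, a \in [:: x; y] -> s a \in [:: x; y].
  by move=> a; rewrite !inE => /orP [] /eqP ->; rewrite ?sx ?sy eqxx ?orbT.
apply: (@card_porbits_gt2 z x w); apply/negP.
- by move/(porbit_fixed sz)/eqP; rewrite eq_sym (negbTE nzx).
- by move/(porbit_fixed sz)/eqP; rewrite (negbTE nwz).
- move/(porbit_sub_closed xy_closed); rewrite !inE eqxx => /(_ isT).
  by rewrite (negbTE nwx) (negbTE nwy).
Qed.

End PermutationOrbits.

Lemma geq_bigminn (I : finType) (F : I -> nat) m i : \big[minn/m]_j F j <= F i.
Proof.
elim: (index_enum I) (mem_index_enum i) => [//|j r IH].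
rewrite inE big_cons => /orP [/eqP <-|/IH le_i]; first exact: geq_minl.
exact: leq_trans (geq_minr _ _) le_i.
Qed.

Lemma tclass_le_shift n (pi : {perm 'I_n}) b : tclass pi <= tperm_ (shiftp pi b).
Proof. exact: geq_bigminn. Qed.

Lemma tclass_ge n k (pi : {perm 'I_n}) :
  (forall b, cyc (shiftp pi b) <= k) -> n - k <= tclass pi.
Proof.
move=> cyc_le; apply: (big_ind (fun t => n - k <= t)); first exact: leq_subr.
  by move=> t1 t2 le1 le2; rewrite leq_min le1 le2.
by move=> b _; rewrite leq_sub2l.
Qed.

Lemma tn_ge n k (pi : {perm 'I_n}) :
  (forall b, cyc (shiftp pi b) <= k) -> n - k <= tn n.
Proof. by move/tclass_ge/leq_trans; apply; apply: leq_bigmax. Qed.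

(** * The upper bound *)

Section ShiftsWithTwoCycles.
Variables (m : nat) (pi : {perm 'I_m.+2}).
Local Notation n := m.+2.
Hypotheses (n_gt3 : 3 < n) (two_cycles : forall b, cyc (shiftp pi b) <= 2).
Local Open Scope ring_scope.

Lemma shiftp_ZpE b x : shiftp pi b x = pi (x + b).
Proof. by rewrite shiftpE; congr (pi _); apply: val_inj; rewrite addZE. Qed.

Let card_ord_gt3 : (3 < #|'I_n|)%N. Proof. by rewrite card_ord. Qed.

Let no_three_cycles b : ~~ (2 < #|porbits (shiftp pi b)|)%N.
Proof. by rewrite -leqNgt; apply: two_cycles. Qed.

(* Two points with the same displacement y - pi y would both be fixed by one shift. *)
Lemma displacement_inj : injective (fun y : 'I_n => y - pi y).
Proof.
move=> y y' /= eq_d; apply: contraNeq (no_three_cycles (y - pi y)) => nyy.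
have fixes z : z - pi z = y - pi y -> shiftp pi (y - pi y) (pi z) = pi z.
  by move=> <-; rewrite shiftp_ZpE addrC subrK.
apply: (@card_porbits_gt2_fixed2 _ _ (pi y) (pi y')).
- exact: ltnW card_ord_gt3.
- by rewrite fixes.
- by rewrite fixes // -eq_d.
- by rewrite (inj_eq perm_inj).
Qed.

Lemma shift_fixed_point b : exists z, shiftp pi b z = z.
Proof.
have /codomP [z ->] : b \in codom (fun y : 'I_n => y - pi y).
  by rewrite (inj_card_onto displacement_inj) // card_ord.
by exists (pi z); rewrite shiftp_ZpE addrC subrK.
Qed.

(* If y + pi y = y' + pi y', the shift by b := y' - pi y swaps y - b and y' - b;
   it also fixes a point, since y |-> y - pi y is onto. *)
Lemma sum_displacement_inj : injective (fun y : 'I_n => y + pi y).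
Proof.
move=> y y' /= eq_s; set b := y' - pi y.
apply: contraNeq (no_three_cycles b) => nyy.
have [z fix_z] := shift_fixed_point b.
apply: (@card_porbits_gt2_fixed_swap _ _ z (y - b) (y' - b)) => //.
- by rewrite shiftp_ZpE subrK /b; ring.
- rewrite shiftp_ZpE subrK /b.
  have -> : pi y' = y + pi y - y' by rewrite eq_s; ring.
  ring.
- by apply: contra nyy => /eqP /addIr ->.
Qed.

Lemma double_sum_sqr_Zp : (\sum_(y : 'I_n) y ^+ 2) *+ 2 = 0.
Proof.
pose S := \sum_(y : 'I_n) y ^+ 2.
have reindex f : injective f -> \sum_(y : 'I_n) f y ^+ 2 = S.
  by move=> f_inj; rewrite [RHS](reindex_inj f_inj).
have parallelogram : \sum_(y : 'I_n) ((y - pi y) ^+ 2 + (y + pi y) ^+ 2)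
                   = \sum_(y : 'I_n) (y ^+ 2 + pi y ^+ 2) *+ 2.
  by apply: eq_bigr => y _; ring.
rewrite sumrMnl !big_split /= (reindex _ displacement_inj) in parallelogram.
rewrite (reindex _ sum_displacement_inj) (reindex _ (@perm_inj _ pi)) in parallelogram.
have -> : S *+ 2 = (S + S) *+ 2 - (S + S) by ring.
by rewrite -parallelogram subrr.
Qed.

Lemma dvdn_double_sum_sqr : (n %| (\sum_(i < n) i ^ 2).*2)%N.
Proof.
have := double_sum_sqr_Zp.
have -> : \sum_(y : 'I_n) y ^+ 2 = (\sum_(i < n) i ^ 2)%N%:R.
  by rewrite natr_sum; apply: eq_bigr => y _; rewrite natrX natr_Zp.
by rewrite -mulr_natl -natrM Zp_nat => /(congr1 val) /= mod0; rewrite /dvdn -mul2n mod0.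
Qed.

End ShiftsWithTwoCycles.

Lemma sum_sqr_ord n : (\sum_(i < n) i ^ 2) * 6 + 3 * n ^ 2 = 2 * n ^ 3 + n.
Proof.
elim: n => [|n IH]; first by rewrite big_ord0.
by rewrite big_ord_recr /=; move: IH; set S := \sum_(i < n) _; nia.
Qed.

Lemma ndvdn_double_sum_sqr n : 3 %| n -> 0 < n -> ~~ (n %| (\sum_(i < n) i ^ 2).*2).
Proof.
move=> /dvdnP [k ->] k_gt0; apply/negP => /dvdnP [c].
have := sum_sqr_ord (k * 3); set S := \sum_(i < k * 3) _ => sumE dvdE.
have /eqP : k * (3 * c + 9 * k) = k * (18 * k ^ 2 + 1) by nia.
by rewrite eqn_pmul2l; [lia | lia].
Qed.

Lemma tn_le n : 3 %| n -> 3 < n -> tn n <= n - 3.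
Proof.
case: n => [|[|m]] // dvd3n n_gt3; apply/bigmax_leqP => pi _.
case: (boolP [forall b, cyc (shiftp pi b) <= 2]) => [/forallP two_cycles | /forallPn [b]].
  have := ndvdn_double_sum_sqr dvd3n (ltn0Sn _).
  by rewrite (dvdn_double_sum_sqr n_gt3 two_cycles).
rewrite -ltnNge => cyc_b.
by apply: leq_trans (tclass_le_shift pi b) _; rewrite leq_sub2l.
Qed.

(** * Skew-affine permutations *)

Local Open Scope ring_scope.

Lemma Z3_cover (u u' a : 'Z_3) : a != 0 -> [|| u' == u, u' == u - a | u' == u - a - a].
Proof.
by case: u => [[|[|[|//]]] ?]; case: u' => [[|[|[|//]]] ?]; case: a => [[|[|[|//]]] ?].
Qed.

Section SkewAffinePermutation.
Variables (F : comPzRingType) (T : finType) (s : {perm T}).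
Variables (U : T -> 'Z_3) (V : T -> F) (G : F -> 'Z_3) (g v0 : F) (k : nat).
Local Notation drift w := (\sum_(j < k) (-1) ^+ j * G (v0 + g ^+ j * w)).
Hypotheses (UV_inj : forall x y, U x = U y -> V x = V y -> x = y)
  (UV_surj : forall u v, exists x, U x = u /\ V x = v)
  (sV : forall x, V (s x) - v0 = g * (V x - v0))
  (sU : forall x, U (s x) = - U x + G (V x))
  (g_gen : forall w, w != 0 -> exists j, g ^+ j = w)
  (g_order : g ^+ k = 1) (k_even : ~~ odd k)
  (drift_neq0 : forall w, w != 0 -> drift w != 0).

Lemma iter_skew_V j x : V ((s ^+ j)%g x) = v0 + g ^+ j * (V x - v0).
Proof.
elim: j => [|j IH]; first by rewrite expg0 perm1; ring.
by rewrite expgSr permM -[LHS](subrK v0) sV IH exprS; ring.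
Qed.

Lemma iter_skew_U j x :
  (-1) ^+ j * U ((s ^+ j)%g x) = U x - \sum_(i < j) (-1) ^+ i * G (V ((s ^+ i)%g x)).
Proof.
elim: j => [|j IH]; first by rewrite expg0 perm1 big_ord0; ring.
by rewrite expgSr permM sU big_ord_recr /= opprD addrA -IH exprS; ring.
Qed.

Lemma skew_period x :
  V ((s ^+ k)%g x) = V x /\ U ((s ^+ k)%g x) = U x - drift (V x - v0).
Proof.
split; first by rewrite iter_skew_V g_order; ring.
have := iter_skew_U k x; rewrite -signr_odd (negbTE k_even) expr0 mul1r => ->.
by congr (_ - _); apply: eq_bigr => i _; rewrite iter_skew_V.
Qed.

Lemma skew_fixed_line z1 z2 x :
  U z1 = - G v0 -> V z1 = v0 -> U z2 = - G v0 - 1 -> V z2 = v0 -> V x = v0 ->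
  (x \in porbit s z1) || (x \in porbit s z2).
Proof.
move=> z1U z1V z2U z2V xV.
have sz2U : U (s z2) = - G v0 - 1 - 1.
  by rewrite sU z2U z2V; case: (G v0) => [[|[|[|//]]] ?]; apply: val_inj.
have sz2V : V (s z2) = v0 by rewrite -[LHS](subrK v0) sV z2V subrr mulr0 add0r.
case/or3P: (Z3_cover (- G v0) (U x) (oner_neq0 _)) => /eqP xU.
- have -> : x = z1 by apply: UV_inj; rewrite ?z1U ?z1V.
  by rewrite porbit_id.
- have -> : x = z2 by apply: UV_inj; rewrite ?z2U ?z2V.
  by rewrite porbit_id orbT.
- have -> : x = s z2 by apply: UV_inj; rewrite ?sz2U ?sz2V.
  by have := mem_porbit s 1 z2; rewrite expg1 => ->; rewrite orbT.
Qed.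

Lemma skew_off_line z x : V z = v0 + 1 -> V x != v0 -> x \in porbit s z.
Proof.
move=> zV xV; have w_neq0 : V x - v0 != 0 by rewrite subr_eq0.
have [y yV y_z] : exists2 y, V y = V x & forall i, (s ^+ i)%g y \in porbit s z.
  have [j gj] := g_gen w_neq0; exists ((s ^+ j)%g z).
    by rewrite iter_skew_V zV gj; ring.
  by move=> i; rewrite -permM -expgD mem_porbit.
have [py_V py_U] := skew_period y.
have [ppy_V ppy_U] := skew_period ((s ^+ k)%g y).
rewrite py_V yV in ppy_U; rewrite yV in py_U.
case/or3P: (Z3_cover (U y) (U x) (drift_neq0 w_neq0)) => /eqP xU.
- have -> : x = y by apply: UV_inj.
  by have := y_z 0; rewrite expg0 perm1.
- have -> : x = (s ^+ k)%g y by apply: UV_inj; rewrite ?py_U ?py_V.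
  exact: y_z.
- have -> : x = (s ^+ (k + k))%g y.
    by rewrite expgD permM; apply: UV_inj; rewrite ?ppy_U ?ppy_V ?py_U ?py_V.
  exact: y_z.
Qed.

Lemma card_porbits_skew : (#|porbits s| <= 3)%N.
Proof.
have [z1 [z1U z1V]] := UV_surj (- G v0) v0.
have [z2 [z2U z2V]] := UV_surj (- G v0 - 1) v0.
have [z3 [_ z3V]] := UV_surj 0 (v0 + 1).
apply: (@card_porbits_le _ _ [:: z1; z2; z3]) => x /=; rewrite orbF.
have [xV | xV] := eqVneq (V x) v0; last by rewrite (skew_off_line z3V xV) !orbT.
by rewrite orbA (skew_fixed_line z1U z1V z2U z2V xV).
Qed.

End SkewAffinePermutation.

(** * The quadratic character and Jacobi sums *)

Section QuadraticCharacter.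
Variable p : nat.
Hypothesis p_pr : prime p.

Lemma Fp_fermat (x : 'F_p) : x != 0 -> x ^+ p.-1 = 1.
Proof.
move=> x_neq0; apply: (mulIf x_neq0); rewrite mul1r -exprSr prednK ?prime_gt0 //.
by rewrite -[in X in x ^+ X](card_Fp p_pr) expf_card.
Qed.

Lemma Fp_prim_root_exists : exists g : 'F_p, p.-1.-primitive_root g.
Proof.
set units := enum (predC1 (0 : 'F_p)).
have units_root : all p.-1.-unity_root units.
  by apply/allP => x; rewrite mem_enum unity_rootE => /Fp_fermat ->.
have size_units : (p.-1 <= size units)%N by rewrite -cardE cardC1 card_Fp.
have [|g _ g_prim] := hasP (has_prim_root _ units_root (enum_uniq _) size_units).
  by rewrite -subn1 subn_gt0 prime_gt1.
by exists g.
Qed.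

Definition legendre (x : 'F_p) : int :=
  if x == 0 then 0 else if x ^+ p.-1./2 == 1 then 1 else -1.

Definition jacobi_sum (a : 'F_p) : int := \sum_(t : 'F_p) legendre t * legendre (a + t).

Variable g : 'F_p.
Hypotheses (p_gt2 : (2 < p)%N) (g_prim : p.-1.-primitive_root g).
Local Notation h := p.-1./2.

Lemma half_pred_double : h.*2 = p.-1.
Proof.
have p_odd : odd p by case: (even_prime p_pr) p_gt2 => [->|].
by rewrite -[RHS]odd_double_half -subn1 oddB ?prime_gt0 // p_odd.
Qed.

Lemma Fp_oppr1_neq1 : -1 != 1 :> 'F_p.
Proof.
rewrite eq_sym -addr_eq0 -mulr2n -(dvdn_pcharf (pchar_Fp p_pr)).
by apply/negP => /dvdn_leq; lia.
Qed.

Lemma expr_half_sign (x : 'F_p) : x != 0 -> (x ^+ h == 1) || (x ^+ h == -1).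
Proof. by move=> x_neq0; rewrite -sqrf_eq1 -exprM muln2 half_pred_double Fp_fermat. Qed.

Lemma prim_root_neq0 : g != 0.
Proof. by rewrite (prim_root_eq0 g_prim) -lt0n -subn1 subn_gt0 prime_gt1. Qed.

Lemma prim_root_half_neq1 : g ^+ h != 1.
Proof.
have := half_pred_double; rewrite -(prim_order_dvd g_prim) -muln2 => h2.
by apply/negP => /dvdn_leq; lia.
Qed.

Lemma legendre0 : legendre 0 = 0.
Proof. by rewrite /legendre eqxx. Qed.

Lemma legendre1 : legendre 1 = 1.
Proof. by rewrite /legendre oner_eq0 expr1n eqxx. Qed.

Lemma legendre_prim_root : legendre g = -1.
Proof. by rewrite /legendre (negbTE prim_root_neq0) (negbTE prim_root_half_neq1). Qed.

Lemma legendre_sign x : x != 0 -> legendre x = 1 \/ legendre x = -1.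
Proof. by move=> x_neq0; rewrite /legendre (negbTE x_neq0); case: ifP; [left | right]. Qed.

Lemma legendre_sqr x : x != 0 -> legendre x * legendre x = 1.
Proof. by case/legendre_sign => ->. Qed.

Lemma legendreM x y : legendre (x * y) = legendre x * legendre y.
Proof.
have [->|x_neq0] := eqVneq x 0; first by rewrite mul0r legendre0 mul0r.
have [->|y_neq0] := eqVneq y 0; first by rewrite mulr0 legendre0 mulr0.
rewrite /legendre mulf_eq0 (negbTE x_neq0) (negbTE y_neq0) /= exprMn.
have oppr1_neq1 := negbTE Fp_oppr1_neq1.
case/orP: (expr_half_sign x_neq0) => /eqP ->; case/orP: (expr_half_sign y_neq0) => /eqP ->;
  by rewrite ?mulr1 ?mul1r ?mulrNN ?mulr1 ?eqxx ?oppr1_neq1.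
Qed.

Lemma legendre_prim_rootX j : legendre (g ^+ j) = (-1) ^+ j.
Proof.
by elim: j => [|j IH]; rewrite ?legendre1 // exprS legendreM IH legendre_prim_root -exprS.
Qed.

Lemma sum_legendre : \sum_(x : 'F_p) legendre x = 0.
Proof.
have g_inj : injective (fun x : 'F_p => g * x) by apply: mulfI; apply: prim_root_neq0.
have : \sum_(x : 'F_p) legendre x = - \sum_(x : 'F_p) legendre x.
  rewrite {1}(reindex_inj g_inj) -sumrN; apply: eq_bigr => x _.
  by rewrite legendreM legendre_prim_root mulN1r.
lia.
Qed.

Lemma jacobi_sum0 : jacobi_sum 0 = p.-1%:R.
Proof.
rewrite /jacobi_sum (bigD1 0) //= legendre0 mul0r add0r.
rewrite (eq_bigr (fun _ => 1)) => [|t t_neq0]; last by rewrite add0r legendre_sqr.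
by rewrite sumr_const cardC1 card_Fp.
Qed.

(* For t != 0, chi t * chi (a + t) = chi (1 + a / t), and t |-> 1 + a / t maps the
   nonzero t onto the u != 1. *)
Lemma jacobi_sum_neq0 a : a != 0 -> jacobi_sum a = -1.
Proof.
move=> a_neq0.
have shift_inj : injective (fun t : 'F_p => 1 + a * t^-1).
  by move=> x y /addrI /(mulfI a_neq0) /invr_inj.
have := sum_legendre; rewrite (reindex_inj shift_inj) (bigD1 0) //=.
rewrite invr0 mulr0 addr0 legendre1 => sum0.
rewrite /jacobi_sum (bigD1 0) //= legendre0 mul0r add0r.
apply: (addrI 1); rewrite addrN -[RHS]sum0; congr (_ + _); apply: eq_bigr => t t_neq0.
have -> : a + t = t * (1 + a * t^-1) by rewrite mulrDr mulr1 mulrCA divff // mulr1 addrC.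
by rewrite legendreM mulrA legendre_sqr // mul1r.
Qed.

Lemma sum_prim_rootX (R : nmodType) (phi : 'F_p -> R) w : w != 0 ->
  \sum_(j < p.-1) phi (g ^+ j * w) = \sum_(t | t != 0) phi t.
Proof.
move=> w_neq0; rewrite -(big_map (fun j : 'I_p.-1 => g ^+ j * w) xpredT phi).
rewrite -[RHS]big_filter; apply/perm_big/uniq_perm.
- rewrite map_inj_uniq ?index_enum_uniq // => i j /(mulIf w_neq0) /eqP.
  by rewrite (eq_prim_root_expr g_prim) !modn_small // => /eqP /val_inj.
- by rewrite filter_uniq ?index_enum_uniq.
move=> t; rewrite mem_filter mem_index_enum andbT.
apply/mapP/idP => [[j _ ->] | t_neq0]; first by rewrite mulf_neq0 ?expf_neq0 ?prim_root_neq0.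
have /(prim_rootP g_prim) [i ti] : (t / w) ^+ p.-1 = 1.
  by rewrite Fp_fermat // mulf_neq0 ?invr_neq0.
by exists i; rewrite ?mem_index_enum // -ti divfK.
Qed.

Lemma alternating_legendre_sum a w : w != 0 ->
  \sum_(j < p.-1) (-1) ^+ j * legendre (a + g ^+ j * w) = legendre w * jacobi_sum a.
Proof.
move=> w_neq0; rewrite /jacobi_sum (bigD1 0) //= legendre0 mul0r add0r.
rewrite -(sum_prim_rootX (fun t => legendre t * legendre (a + t)) w_neq0) mulr_sumr.
apply: eq_bigr => j _; rewrite legendreM legendre_prim_rootX.
by rewrite -[LHS]mul1r -(legendre_sqr w_neq0); ring.
Qed.

End QuadraticCharacter.

(** * The construction for p > 3 *)

Section ChineseCoordinates.
Variable p : nat.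
Hypotheses (p_pr : prime p) (p_coprime3 : coprime 3 p).
Local Notation n := (3 * p)%N.

Definition crtZ3 (x : 'I_n) : 'Z_3 := (val x)%:R.
Definition crtFp (x : 'I_n) : 'F_p := (val x)%:R.

Lemma crt_gt0 : (0 < n)%N.
Proof. by rewrite muln_gt0 (prime_gt0 p_pr). Qed.

Definition crt_ord (u : 'Z_3) (v : 'F_p) : 'I_n :=
  Ordinal (ltn_pmod (chinese 3 p u v) crt_gt0).

Lemma Z3_natr_mod k : ((k %% n)%:R : 'Z_3) = k%:R.
Proof. by apply: val_inj; rewrite /= !(val_Zp_nat (p := 3)) // modn_dvdm ?dvdn_mulr. Qed.

Lemma Fp_natr_mod k : ((k %% n)%:R : 'F_p) = k%:R.
Proof. by apply: val_inj; rewrite /= !val_Fp_nat // modn_dvdm ?dvdn_mull. Qed.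

Lemma crtZ3_ord u v : crtZ3 (crt_ord u v) = u.
Proof.
apply: val_inj; rewrite /crtZ3 /= Z3_natr_mod (val_Zp_nat (p := 3)) //.
by rewrite chinese_modl // modn_small.
Qed.

Lemma crtFp_ord u v : crtFp (crt_ord u v) = v.
Proof.
apply: val_inj; rewrite /crtFp /= Fp_natr_mod val_Fp_nat // chinese_modr //.
by rewrite modn_small // -[X in (_ < X)%N](card_Fp p_pr) card_ord.
Qed.

Lemma crt_inj x y : crtZ3 x = crtZ3 y -> crtFp x = crtFp y -> x = y.
Proof.
move=> /(congr1 val) eq3 /(congr1 val) eqp; apply: val_inj => /=.
move: eq3 eqp; rewrite /= (val_Zp_nat (p := 3)) // (val_Zp_nat (p := 3)) //.
rewrite !val_Fp_nat // => eq3 eqp.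
have : val x == val y %[mod n] by rewrite chinese_remainder // eq3 eqp !eqxx.
by rewrite !modn_small ?ltn_ord // => /eqP.
Qed.

Lemma crtZ3_add x b : crtZ3 (addZ x b) = crtZ3 x + crtZ3 b.
Proof. by rewrite /crtZ3 addZE Z3_natr_mod natrD. Qed.

Lemma crtFp_add x b : crtFp (addZ x b) = crtFp x + crtFp b.
Proof. by rewrite /crtFp addZE Fp_natr_mod natrD. Qed.

End ChineseCoordinates.

Arguments crtZ3 {p} x.
Arguments crtFp {p} x.

Lemma sum_sign_even (R : pzRingType) k : ~~ odd k -> \sum_(j < k) (-1) ^+ j = 0 :> R.
Proof.
move=> k_even; rewrite -[k]odd_double_half (negbTE k_even) add0n.
elim: k./2 => [|i IH]; first by rewrite big_ord0.
by rewrite doubleS !big_ord_recr /= IH exprS mulN1r add0r subrr.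
Qed.

Lemma Z3_weighted_sum_neq0 (q : 'Z_3) (b0 b1 : bool) : q != -1 -> ~~ (b0 && b1) ->
  (if b0 then q else -1) + (1 - q) * (if b1 then q else -1) != 0.
Proof. by case: q => [[|[|[|//]]] ?]; case: b0; case: b1. Qed.

Section SkewConstruction.
Variables (p : nat) (g : 'F_p).
Hypotheses (p_pr : prime p) (p_gt3 : (3 < p)%N) (g_prim : p.-1.-primitive_root g).
Local Notation n := (3 * p)%N.

Lemma coprime3 : coprime 3 p.
Proof. by rewrite prime_coprime // dvdn_prime2 //; apply: contraTneq p_gt3 => <-. Qed.

(* The weight is 0 if p = 2 mod 3 and 1 if p = 1 mod 3: when J 0 = p - 1 vanishes
   mod 3, the shifted Jacobi sum is needed to keep jacobi_combination_neq0 true. *)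
Definition jacobi_weight : 'Z_3 := 1 - p.-1%:R.

Definition twist (v : 'F_p) : 'Z_3 :=
  (legendre v)%:~R + jacobi_weight * (legendre (v - 1))%:~R.

Definition skew_fun (x : 'I_n) : 'I_n :=
  crt_ord p_pr (- crtZ3 x + twist (crtFp x)) (g * crtFp x).

Let p_gt2 : (2 < p)%N := ltnW p_gt3.
Let crtZ3_ordE := crtZ3_ord p_pr coprime3.
Let crtFp_ordE := crtFp_ord p_pr coprime3.
Let crtFp_addE := crtFp_add p_pr.
Let p_pred_even : ~~ odd p.-1.
Proof. by rewrite -(half_pred_double p_pr p_gt2) odd_double. Qed.

Lemma skew_fun_inj : injective skew_fun.
Proof.
move=> x y eq_xy.
have eqFp : crtFp x = crtFp y.
  move: (congr1 crtFp eq_xy); rewrite !crtFp_ordE.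
  by apply: mulfI; apply: prim_root_neq0 g_prim.
apply: (crt_inj p_pr coprime3 _ eqFp).
by move: (congr1 crtZ3 eq_xy); rewrite !crtZ3_ordE eqFp => /addIr /oppr_inj.
Qed.

Definition skew_perm : {perm 'I_n} := perm skew_fun_inj.

Lemma crtZ3_shift b x :
  crtZ3 (shiftp skew_perm b x) = - crtZ3 x + (twist (crtFp x + crtFp b) - crtZ3 b).
Proof. by rewrite shiftpE permE /skew_fun crtZ3_ordE crtZ3_add crtFp_addE; ring. Qed.

Lemma crtFp_shift b x :
  crtFp (shiftp skew_perm b x) = g * crtFp x + g * crtFp b.
Proof. by rewrite shiftpE permE /skew_fun crtFp_ordE crtFp_addE mulrDr. Qed.

Lemma jacobi_sum_Z3 (a : 'F_p) : (jacobi_sum a)%:~R = if a == 0 then p.-1%:R else -1 :> 'Z_3.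
Proof.
have [->|a_neq0] := eqVneq a 0; first by rewrite jacobi_sum0 // rmorph_nat.
by rewrite (jacobi_sum_neq0 p_pr p_gt2 g_prim a_neq0) rmorphN1.
Qed.

Lemma jacobi_combination_neq0 (a : 'F_p) :
  (jacobi_sum a)%:~R + jacobi_weight * (jacobi_sum (a - 1))%:~R != 0 :> 'Z_3.
Proof.
rewrite !jacobi_sum_Z3 subr_eq0; apply: Z3_weighted_sum_neq0.
  have : ~~ (3 %| p)%N by rewrite -prime_coprime // coprime3.
  rewrite -subr_eq0 opprK -mulrSr prednK ?prime_gt0 //; apply: contra => /eqP.
  by move/(congr1 val); rewrite /= (val_Zp_nat (p := 3)) // /dvdn => ->.
by apply/negP => /andP [/eqP ->]; rewrite eq_sym oner_eq0.
Qed.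

Lemma alternating_twist_neq0 a w : w != 0 ->
  \sum_(j < p.-1) (-1) ^+ j * twist (a + g ^+ j * w) != 0.
Proof.
move=> w_neq0; have alt := alternating_legendre_sum p_pr p_gt2 g_prim _ w_neq0.
have -> : \sum_(j < p.-1) (-1) ^+ j * twist (a + g ^+ j * w) = (legendre w)%:~R *
    ((jacobi_sum a)%:~R + jacobi_weight * (jacobi_sum (a - 1))%:~R).
  rewrite mulrDr mulrCA -!intrM -!alt !rmorph_sum mulr_sumr -big_split /=.
  apply: eq_bigr => j _; rewrite /twist addrAC !rmorphM rmorphXn rmorphN1; ring.
case: (legendre_sign w_neq0) => ->; rewrite ?rmorph1 ?rmorphN1 ?mul1r ?mulN1r ?oppr_eq0;
  exact: jacobi_combination_neq0.
Qed.

Lemma cyc_shift_skew_perm b : (cyc (shiftp skew_perm b) <= 3)%N.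
Proof.
have one_subg_neq0 : 1 - g != 0.
  rewrite subr_eq0 eq_sym; apply: contra (prim_root_half_neq1 p_pr p_gt2 g_prim).
  by move=> /eqP ->; rewrite expr1n.
pose v0 := g * crtFp b / (1 - g).
pose G v := twist (v + crtFp b) - crtZ3 b.
apply: (card_porbits_skew (U := crtZ3) (V := crtFp) (G := G) (g := g) (v0 := v0) (k := p.-1)).
- exact: crt_inj p_pr coprime3.
- by move=> u v; exists (crt_ord p_pr u v); rewrite crtZ3_ordE crtFp_ordE.
- by move=> x; rewrite crtFp_shift /v0 -{1}(divfK one_subg_neq0 (g * crtFp b)); ring.
- by move=> x; rewrite crtZ3_shift.
- move=> w w_neq0; have /(prim_rootP g_prim) [j ->] := Fp_fermat p_pr w_neq0.
  by exists j.
- exact: prim_expr_order.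
- exact: p_pred_even.
move=> w w_neq0; rewrite /G.
have -> : \sum_(j < p.-1) (-1) ^+ j * (twist (v0 + g ^+ j * w + crtFp b) - crtZ3 b) =
    \sum_(j < p.-1) (-1) ^+ j * twist (v0 + crtFp b + g ^+ j * w)
    - (\sum_(j < p.-1) (-1) ^+ j) * crtZ3 b.
  by rewrite mulr_suml -sumrB; apply: eq_bigr => j _; rewrite mulrBr (addrAC v0).
by rewrite sum_sign_even // mul0r subr0 alternating_twist_neq0.
Qed.

End SkewConstruction.

Local Close Scope ring_scope.

(** * Small cases *)

Section OrbitCertificates.
Variable T : finType.

Definition covered_by (f : T -> T) (k : nat) (xs reps : seq T) : bool :=
  all (fun x => has (fun z => x \in traject f z k) reps) xs.

(* Any choice of representatives is sound: [covered_by] is checked independently. *)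
Definition greedy_reps (f : T -> T) (k : nat) (xs : seq T) : seq T :=
  foldl (fun reps x => if has (fun z => x \in traject f z k) reps then reps else x :: reps)
    [::] xs.

Lemma card_porbits_covered (s : {perm T}) f k xs reps :
  s =1 f -> (forall x, x \in xs) -> covered_by f k xs reps -> #|porbits s| <= size reps.
Proof.
move=> sf xs_all /allP cover; apply: card_porbits_le => x.
apply: sub_has (cover x (xs_all x)) => z /trajectP [i _ ->].
by rewrite -(eq_iter sf) -permX mem_porbit.
Qed.

End OrbitCertificates.

Section TableCertificate.
Variables (n : nat) (n_gt0 : 0 < n).

Definition ord_mod k : 'I_n := Ordinal (ltn_pmod k n_gt0).

Definition ords : seq 'I_n := map ord_mod (iota 0 n).

Lemma mem_ords x : x \in ords.
Proof.
apply/mapP; exists (val x); first by rewrite mem_iota add0n /=.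
by apply: val_inj; rewrite /= modn_small.
Qed.

Definition table_fun (t : seq nat) (x : 'I_n) : 'I_n := ord_mod (nth 0 t x).

Definition table_inv (t : seq nat) (y : 'I_n) : 'I_n :=
  nth y ords (index y (map (table_fun t) ords)).

Definition three_cycle_table (t : seq nat) : bool :=
  all (fun x => table_inv t (table_fun t x) == x) ords &&
  all (fun b => let f x := table_fun t (addZ x b) in let reps := greedy_reps f n ords in
                covered_by f n ords reps && (size reps <= 3))
    ords.

Lemma tn_ge_table t : three_cycle_table t -> n - 3 <= tn n.
Proof.
case/andP => /allP t_invK /allP certificate.
have t_inj : injective (table_fun t).
  by apply: (can_inj (g := table_inv t)) => x; apply/eqP/t_invK/mem_ords.
apply: (@tn_ge _ _ (perm t_inj)) => b.
have /andP [cover size_le3] := certificate b (mem_ords b).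
apply: leq_trans size_le3; apply: card_porbits_covered mem_ords cover => x.
by rewrite shiftpE permE.
Qed.

End TableCertificate.

Lemma tn6_ge : 6 - 3 <= tn 6.
Proof. by apply: (@tn_ge_table 6 isT [:: 4; 2; 1; 5; 3; 0]); vm_compute. Qed.

Lemma tn9_ge : 9 - 3 <= tn 9.
Proof. by apply: (@tn_ge_table 9 isT [:: 5; 7; 1; 0; 2; 4; 6; 3; 8]); vm_compute. Qed.

Theorem corollary1p5 (p : nat) : prime p -> tn (3 * p) = 3 * p - 3.
Proof.
move=> p_pr; have p_gt1 := prime_gt1 p_pr.
apply/eqP; rewrite eqn_leq tn_le ?dvdn_mulr //=; last by lia.
have [-> | p_neq2] := eqVneq p 2; first exact: tn6_ge.
have [-> | p_neq3] := eqVneq p 3; first exact: tn9_ge.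
have p_gt3 : 3 < p by lia.
have [g g_prim] := Fp_prim_root_exists p_pr.
exact: tn_ge (cyc_shift_skew_perm p_pr p_gt3 g_prim).
Qed.
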